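(* Let $c>0$ and $F_c(t)=\log\big(1+2c\sinh\frac{t}{2}\big)$ for $t>0$. The function $t\mapsto F_c(t)/t$ is decreasing from $(0,\infty)$ onto $(1/2,c)$ if and only if $c\ge 1$. *)

From Stdlib Require Import Reals.
Open Scope R_scope.

Definition F (c t : R) : R := ln (1 + 2 * c * sinh (t / 2)).

Definition G (c t : R) : R := F c t / t.

(* With t = 2 x and v = e^x one has 1 + 2 c sinh x = Q(x) / v, where
   Q(x) = c v^2 + v - c, so F_c(t)/t = (L(x) - 1) / 2 for the growth rate
   L(x) = ln Q(x) / x.  Its derivative is -I(x) / x^2, where I(x) is the value
   at 0 of the tangent to ln Q at x.  For c >= 1, I > 0: while v < 2c because
   I(0) = 0 and I is increasing there, beyond because then Q'/Q <= 2 < ln Q / x.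
   So L decreases from (ln Q)'(0) = 2c + 1 at 0 to 2 at infinity, and stays
   strictly between (Q > v^2, and (2c + 1) x - ln Q(x) increases).  For c < 1,
   Q(x) < v^2 at v = 1 / (1 - c), so F_c(t)/t drops below 1/2. *)

From Stdlib Require Import Reals Lra.
From Coquelicot Require Import Coquelicot.
Open Scope R_scope.

Definition Q (c x : R) : R := c * exp x * exp x + exp x - c.
Definition Q' (c x : R) : R := 2 * c * exp x * exp x + exp x.
Definition growth_rate (c x : R) : R := ln (Q c x) / x.
Definition tangent_intercept (c x : R) : R := ln (Q c x) - x * (Q' c x / Q c x).

Lemma lt_of_derive_pos (f f' : R -> R) (a b : R) :
  a < b ->
  (forall x, a <= x <= b -> derivable_pt_lim f x (f' x)) ->
  (forall x, a < x < b -> 0 < f' x) ->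
  f a < f b.
Proof.
  intros hab hder hpos.
  destruct (MVT_cor2 f f' a b hab hder) as [x [hx hxab]].
  specialize (hpos x hxab). nra.
Qed.

Lemma one_le_exp (x : R) : 0 <= x -> 1 <= exp x.
Proof. intros hx. pose proof (exp_ineq1_le x). lra. Qed.

Lemma one_lt_exp (x : R) : 0 < x -> 1 < exp x.
Proof. intros hx. pose proof (exp_ineq1 x ltac:(lra)). lra. Qed.

Lemma exp_double (x : R) : exp (2 * x) = exp x * exp x.
Proof. rewrite <- exp_plus. f_equal. ring. Qed.

Lemma Q_0 (c : R) : Q c 0 = 1.
Proof. unfold Q. rewrite exp_0. ring. Qed.

Lemma Q_pos (c x : R) : 0 <= c -> 0 <= x -> 0 < Q c x.
Proof.
  intros hc hx. pose proof (one_le_exp x hx). unfold Q.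
  assert (0 <= c * (exp x * exp x - 1)) by (apply Rmult_le_pos; nra).
  nra.
Qed.

Lemma F_double (c x : R) : 0 <= c -> 0 <= x -> F c (2 * x) = ln (Q c x) - x.
Proof.
  intros hc hx. pose proof (Q_pos c x hc hx). pose proof (exp_pos x).
  unfold F, sinh. replace (2 * x / 2) with x by field. rewrite exp_Ropp.
  replace (1 + 2 * c * ((exp x - / exp x) / 2)) with (Q c x / exp x)
    by (unfold Q; field; lra).
  rewrite ln_div, ln_exp; lra.
Qed.

Lemma G_eq_growth_rate (c t : R) :
  0 <= c -> 0 < t -> G c t = (growth_rate c (t / 2) - 1) / 2.
Proof.
  intros hc ht. unfold G, growth_rate.
  replace t with (2 * (t / 2)) at 1 2 by field.
  rewrite F_double by lra. field. lra.
Qed.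

Lemma ln_Q_derive (c x : R) :
  0 < Q c x -> derivable_pt_lim (fun y => ln (Q c y)) x (Q' c x / Q c x).
Proof.
  intros hq. apply is_derive_Reals. unfold Q, Q' in *.
  auto_derive; [lra | field; lra].
Qed.

Lemma growth_rate_derive (c x : R) : 0 <= c -> 0 < x ->
  derivable_pt_lim (growth_rate c) x (- tangent_intercept c x / (x * x)).
Proof.
  intros hc hx. pose proof (Q_pos c x hc (Rlt_le _ _ hx)) as hq.
  apply is_derive_Reals. unfold growth_rate, tangent_intercept, Q, Q', Rminus in *.
  auto_derive; [lra | field; lra].
Qed.

Lemma growth_rate_continuous (c x : R) :
  0 <= c -> 0 < x -> continuity_pt (growth_rate c) x.
Proof.
  intros hc hx. apply derivable_continuous_pt.
  exists (- tangent_intercept c x / (x * x)). apply growth_rate_derive; assumption.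
Qed.

Lemma tangent_intercept_derive (c x : R) : 0 <= c -> 0 <= x ->
  derivable_pt_lim (tangent_intercept c) x
    (x * c * exp x * (1 + 4 * c * exp x - exp x * exp x) / (Q c x * Q c x)).
Proof.
  intros hc hx. pose proof (Q_pos c x hc hx) as hq.
  apply is_derive_Reals. unfold tangent_intercept, Q, Q' in *.
  auto_derive; [lra | field; lra].
Qed.

Lemma growth_rate_lim_0 (c : R) : is_lim (growth_rate c) 0 (2 * c + 1).
Proof.
  assert (hder := ln_Q_derive c 0 ltac:(rewrite Q_0; lra)).
  unfold Q' in hder. rewrite Q_0, exp_0 in hder.
  replace ((2 * c * 1 * 1 + 1) / 1) with (2 * c + 1) in hder by field.
  apply is_lim_spec. intros eps.
  destruct (hder eps (cond_pos eps)) as [delta hdelta].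
  exists delta. intros y hy hy0.
  change (Rabs (y - 0) < delta) in hy. rewrite Rminus_0_r in hy.
  specialize (hdelta y hy0 hy).
  rewrite Q_0, ln_1, Rplus_0_l, Rminus_0_r in hdelta.
  exact hdelta.
Qed.

Lemma growth_rate_lt (c x : R) : 1 / 2 <= c -> 0 < x -> growth_rate c x < 2 * c + 1.
Proof.
  intros hc hx.
  assert (hgap : (2 * c + 1) * 0 - ln (Q c 0) < (2 * c + 1) * x - ln (Q c x)).
  { apply (lt_of_derive_pos (fun y => (2 * c + 1) * y - ln (Q c y))
             (fun y => (2 * c + 1) - Q' c y / Q c y)); [exact hx | |].
    - intros y hy. apply derivable_pt_lim_minus.
      + replace (2 * c + 1) with ((2 * c + 1) * 1) at 2 by ring.
        apply derivable_pt_lim_scal, derivable_pt_lim_id.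
      + apply ln_Q_derive, Q_pos; lra.
    - intros y hy. pose proof (one_lt_exp y ltac:(lra)) as hv.
      pose proof (Q_pos c y ltac:(lra) ltac:(lra)) as hq.
      assert (hfactor : (2 * c + 1) * Q c y - Q' c y
                        = c * (exp y - 1) * ((2 * c - 1) * (exp y + 1) + 2))
        by (unfold Q, Q'; ring).
      assert (0 < c * (exp y - 1) * ((2 * c - 1) * (exp y + 1) + 2))
        by (apply Rmult_lt_0_compat; [apply Rmult_lt_0_compat |]; nra).
      apply Rlt_0_minus, Rlt_div_l; lra. }
  rewrite Q_0, ln_1, Rmult_0_r in hgap.
  unfold growth_rate. apply Rlt_div_l; lra.
Qed.

Section GrowthRateLargeC.

Variable c : R.
Hypothesis c_ge1 : 1 <= c.

Lemma double_lt_ln_Q (x : R) : 0 < x -> 2 * x < ln (Q c x).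
Proof.
  intros hx. pose proof (one_lt_exp x hx).
  rewrite <- (ln_exp (2 * x)). apply ln_increasing; [apply exp_pos |].
  rewrite exp_double. unfold Q.
  assert (0 <= (c - 1) * (exp x * exp x - 1)) by (apply Rmult_le_pos; nra).
  nra.
Qed.

Lemma two_lt_growth_rate (x : R) : 0 < x -> 2 < growth_rate c x.
Proof.
  intros hx. unfold growth_rate. apply Rlt_div_r; [lra |].
  exact (double_lt_ln_Q x hx).
Qed.

Lemma tangent_intercept_pos (x : R) : 0 < x -> 0 < tangent_intercept c x.
Proof.
  intros hx. pose proof (one_lt_exp x hx) as hv.
  destruct (Rle_or_lt (2 * c) (exp x)) as [hbig | hsmall].
  - assert (hq : 0 < Q c x) by (apply Q_pos; lra).
    pose proof (double_lt_ln_Q x hx).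
    assert (hQ' : Q' c x / Q c x <= 2).
    { apply Rle_div_l; [exact hq |]. unfold Q, Q' in *. lra. }
    unfold tangent_intercept. nra.
  - replace 0 with (tangent_intercept c 0)
      by (unfold tangent_intercept; rewrite Q_0, ln_1; ring).
    apply (lt_of_derive_pos _
             (fun y => y * c * exp y * (1 + 4 * c * exp y - exp y * exp y)
                       / (Q c y * Q c y)) 0 x hx).
    + intros y hy. apply tangent_intercept_derive; lra.
    + intros y hy.
      pose proof (one_lt_exp y ltac:(lra)) as hw.
      assert (exp y < exp x) by (apply exp_increasing; lra).
      assert (0 < Q c y) by (apply Q_pos; lra).
      apply Rdiv_lt_0_compat; [| nra].
      repeat apply Rmult_lt_0_compat; nra.
Qed.

Lemma growth_rate_decreasing (s t : R) :
  0 < s -> s < t -> growth_rate c t < growth_rate c s.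
Proof.
  intros hs hst.
  enough (- growth_rate c s < - growth_rate c t) by lra.
  apply (lt_of_derive_pos (fun x => - growth_rate c x)
           (fun x => - (- tangent_intercept c x / (x * x))) s t hst).
  - intros x hx. apply (derivable_pt_lim_opp (growth_rate c)).
    apply growth_rate_derive; lra.
  - intros x hx. pose proof (tangent_intercept_pos x ltac:(lra)).
    unfold Rdiv. rewrite Ropp_mult_distr_l, Ropp_involutive.
    apply Rdiv_lt_0_compat; nra.
Qed.

Lemma growth_rate_lim_pinfty : is_lim (growth_rate c) p_infty 2.
Proof.
  apply (is_lim_le_le_loc (fun _ => 2) (fun x => 2 + ln (1 + c) / x)).
  - exists 0. intros x hx. split; [left; apply two_lt_growth_rate; exact hx |].
    pose proof (one_le_exp x ltac:(lra)).
    assert (hQ : Q c x <= exp (2 * x) * (1 + c)) by (rewrite exp_double; unfold Q; nra).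
    unfold growth_rate. apply Rle_div_l; [lra |].
    replace ((2 + ln (1 + c) / x) * x) with (ln (exp (2 * x) * (1 + c)))
      by (rewrite ln_mult, ln_exp by (apply exp_pos || lra); field; lra).
    apply ln_le; [apply Q_pos; lra | exact hQ].
  - apply is_lim_const.
  - assert (hlim : is_lim (fun x => 2 + ln (1 + c) / x) p_infty (2 + ln (1 + c) * 0)).
    { apply is_lim_plus'; [apply is_lim_const |].
      apply (is_lim_scal_l (fun x => / x) (ln (1 + c)) p_infty 0).
      apply (is_lim_inv (fun x => x) p_infty p_infty); [apply is_lim_id | discriminate]. }
    rewrite Rmult_0_r, Rplus_0_r in hlim. exact hlim.
Qed.

Lemma growth_rate_surjective (z : R) :
  2 < z < 2 * c + 1 -> exists x, 0 < x /\ growth_rate c x = z.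
Proof.
  intros hz.
  destruct (IVT_Rbar_decr (growth_rate c) 0 p_infty (2 * c + 1) 2 z) as [x [hx [_ hxz]]].
  - apply growth_rate_lim_0.
  - exact growth_rate_lim_pinfty.
  - intros x hx _. apply growth_rate_continuous; simpl in hx; lra.
  - exact I.
  - exact hz.
  - exists x. split; [exact hx | exact hxz].
Qed.

End GrowthRateLargeC.

Lemma exists_growth_rate_lt_2 (c : R) :
  0 < c < 1 -> exists x, 0 < x /\ growth_rate c x < 2.
Proof.
  intros hc.
  set (x := ln (/ (1 - c))).
  assert (hv : exp x = / (1 - c)) by (apply exp_ln, Rinv_0_lt_compat; lra).
  assert (hx : 0 < x).
  { rewrite <- ln_1. apply ln_increasing; [lra |].
    rewrite <- Rinv_1. apply Rinv_lt_contravar; lra. }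
  exists x. split; [exact hx |].
  assert (hQ : Q c x = exp (2 * x) - c).
  { rewrite exp_double. unfold Q. rewrite hv. field. lra. }
  unfold growth_rate. apply Rlt_div_l; [exact hx |].
  rewrite <- (ln_exp (2 * x)).
  apply ln_increasing; [apply Q_pos; lra | rewrite hQ; lra].
Qed.

Theorem lemma3p4 (c : R) (hc : 0 < c) :
  ((forall s t, 0 < s -> s < t -> G c t < G c s) /\
   (forall y, (1 / 2 < y /\ y < c) <-> (exists t, 0 < t /\ G c t = y)))
  <-> 1 <= c.
Proof.
  split.
  - intros [_ hrange]. destruct (Rlt_or_le c 1) as [hc1 | hc1]; [| exact hc1].
    destruct (exists_growth_rate_lt_2 c) as [x [hx hlt]]; [lra |].
    destruct (proj2 (hrange (G c (2 * x)))) as [hhalf _].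
    { exists (2 * x). split; [lra | reflexivity]. }
    rewrite G_eq_growth_rate in hhalf by lra.
    replace (2 * x / 2) with x in hhalf by field. lra.
  - intros hc1. split.
    + intros s t hs hst. rewrite !G_eq_growth_rate by lra.
      pose proof (growth_rate_decreasing c hc1 (s / 2) (t / 2) ltac:(lra) ltac:(lra)).
      lra.
    + intros y. split.
      * intros hy.
        destruct (growth_rate_surjective c hc1 (2 * y + 1)) as [x [hx hxy]]; [lra |].
        exists (2 * x). split; [lra |].
        rewrite G_eq_growth_rate by lra.
        replace (2 * x / 2) with x by field. lra.
      * intros [t [ht <-]]. rewrite G_eq_growth_rate by lra.
        pose proof (two_lt_growth_rate c hc1 (t / 2) ltac:(lra)).
        pose proof (growth_rate_lt c (t / 2) ltac:(lra) ltac:(lra)).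
        lra.
Qed.
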